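(* Let $I=(\mathcal{M},[N],(u_i)_{i\in[N]})$ be a non-negative instance with $\mathcal{M}\neq\emptyset$ and let $(S_1,\ldots,S_N)$ be the allocation produced by the round-robin greedy protocol for $I$. Then for every agent $i\in[N]$, $$u_i(S_i)\le \frac{1}{N}u_i(\mathcal{M})+\Big(1-\frac1N\Big)u^i_{\max},$$ where $u^i_{\max}:=\max_{j\in\mathcal{M}}u_i(j)$.
   Context: A non-negative instance: finite item set $\mathcal{M}$, agents $[N]=\{1,\dots,N\}$, additive utilities $u_i$ with $u_i(j)\ge 0$. The round-robin greedy protocol: agents pick in the fixed order $1,2,\dots,N,1,2,\dots,N,\dots$; at her turn agent $i$ receives an item of lowest utility $u_i$ among the unallocated items (ties broken arbitrarily), until all items are allocated; $S_i$ is the set agent $i$ receives. *)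

From HB Require Import structures.
From mathcomp Require Import all_boot all_order all_algebra.
Set Implicit Arguments. Unset Strict Implicit. Unset Printing Implicit Defensive.
Import Order.TTheory GRing.Theory Num.Theory.
Local Open Scope ring_scope.

(* Items: a finType M.  Agents: 'I_N (agent k+1 of the paper is ordinal k).
   Utilities: u : 'I_N -> M -> R, additive: u_i(S) = \sum_(j in S) u i j. *)

(* A run of the round-robin greedy protocol is recorded as the sequence s of
   picked items, in picking order. *)
Definition rr_greedy_run (R : realFieldType) (M : finType) (N : nat)
    (u : 'I_N -> M -> R) (s : seq M) : Prop :=
  [/\ uniq s,
      (forall j : M, j \in s) &
      (forall (t : nat) (i : 'I_N) (j : M),
          (t < size s)%N -> (t %% N)%N = val i -> j \notin take t s ->
          u i (nth j s t) <= u i j)].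

Definition rr_bundle (M : finType) (N : nat) (s : seq M) (i : 'I_N) : {set M} :=
  [set x : M | (x \in s) && ((index x s %% N)%N == val i)].

Definition uset (R : realFieldType) (M : finType) (v : M -> R) (S : {set M}) : R :=
  \sum_(j in S) v j.

(* u^i_max = max_{j in M} u_i(j); since utilities are non-negative and M is
   nonempty, folding Num.max from 0 gives exactly this maximum. *)
Definition umax (R : realFieldType) (M : finType) (v : M -> R) : R :=
  \big[Num.max/0]_(j : M) v j.

From HB Require Import structures.
From mathcomp Require Import all_boot all_order all_algebra.
From mathcomp Require Import zify.
Import Order.TTheory GRing.Theory Num.Theory.
Local Open Scope ring_scope.

(* Agent i picks at the steps t = i (mod N).  When she picks at step t, every
   item picked at steps t, ..., t + N - 1 is still available, so her item is
   worth at most the average of these N items.  Summing over her picks, the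
   windows are disjoint and cover all steps from her first pick on; only the
   last window may run past the end of the protocol, and its at most N - 1
   missing items are accounted for by u^i_max each. *)

Lemma big_nat_mod_window (V : nmodType) (F : nat -> V) (N m n i : nat) :
  (m %% N)%N = i -> (m < n)%N -> (n <= m + N)%N ->
  \sum_(m <= t < n | (t %% N == i)%N) F t = F m.
Proof.
move=> mi mn nmN; rewrite big_ltn_cond // mi eqxx big_nat_cond big1 ?addr0 //.
move=> t /andP[/andP[mt tn] /eqP ti]; exfalso.
have tE : t = (m + (t - m))%N by lia.
have : (m + (t - m) == m + 0 %[mod N])%N by rewrite -tE addn0 ti mi.
by rewrite eqn_modDl mod0n modn_small; [move/eqP; lia | lia].
Qed.

Section PicksAverage.

Variables (R : realFieldType) (N i n : nat) (v : nat -> R) (U : R).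
Hypotheses (N_gt0 : (0 < N)%N) (i_lt_N : (i < N)%N).
Hypotheses (v_ge0 : forall t, 0 <= v t) (U_ge0 : 0 <= U).
Hypothesis v_le : forall t, (t < n)%N -> v t <= U.
Hypothesis v_pick_le :
  forall t t', (t <= t')%N -> (t' < n)%N -> (t %% N)%N = i -> v t <= v t'.

Lemma pick_window_le m :
  (m %% N)%N = i -> (m + N <= n)%N -> N%:R * v m <= \sum_(m <= t < m + N) v t.
Proof.
move=> mi mNn.
have -> : N%:R * v m = \sum_(m <= t < m + N) v m.
  by rewrite sumr_const_nat addKn mulr_natl.
by apply: ler_sum_nat => t tm; apply: v_pick_le => //; lia.
Qed.

Lemma pick_last_window_le m :
  (m %% N)%N = i -> (m < n)%N -> (n < m + N)%N ->
  N%:R * v m <= \sum_(m <= t < n) v t + N.-1%:R * U.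
Proof.
move=> mi mn nmN.
have -> : N%:R * v m = (n - m)%:R * v m + (N - (n - m))%:R * v m.
  by rewrite -mulrDl -natrD; congr (_%:R * _); lia.
apply: lerD.
  rewrite mulr_natl -sumr_const_nat.
  by apply: ler_sum_nat => t tm; apply: v_pick_le => //; lia.
apply: ler_pM; rewrite ?ler0n ?v_ge0 ?v_le // ler_nat; lia.
Qed.

Lemma picks_from_le m :
  (m %% N)%N = i ->
  N%:R * \sum_(m <= t < n | (t %% N == i)%N) v t
    <= \sum_(m <= t < n) v t + N.-1%:R * U.
Proof.
elim: (n - m)%N {-2}m (leqnn (n - m)) => [|d IH] {}m nmd mi.
  by rewrite !big_geq ?mulr0 ?add0r ?mulr_ge0 ?ler0n //; lia.
have [nm|mn] := leqP n m.
  by rewrite !big_geq ?mulr0 ?add0r ?mulr_ge0 ?ler0n //.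
have [mNn|nmN] := leqP (m + N) n; last first.
  by rewrite big_nat_mod_window //; [exact: pick_last_window_le | lia].
rewrite !(big_cat_nat _ (n := m + N) (m := m) (p := n)) ?leq_addr //=.
rewrite big_nat_mod_window //; last lia.
by rewrite mulrDr -addrA lerD ?pick_window_le // IH ?modnDr //; lia.
Qed.

Lemma picks_le :
  N%:R * \sum_(0 <= t < n | (t %% N == i)%N) v t
    <= \sum_(0 <= t < n) v t + N.-1%:R * U.
Proof.
have no_pick_before t : (t < i)%N -> (t %% N == i)%N = false.
  by move=> ti; rewrite modn_small ?(ltn_eqF ti) // (ltn_trans ti).
have [ni|iN] := leqP n i.
  rewrite big_nat_cond big1 ?mulr0; last first.
    by move=> t /andP[/andP[_ tn]]; rewrite no_pick_before //; lia.
  by rewrite addr_ge0 ?mulr_ge0 ?ler0n // sumr_ge0.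
rewrite !(big_cat_nat _ (n := i) (m := 0) (p := n)) ?(ltnW iN) //=.
rewrite [X in _ * (X + _)]big_nat_cond big1 ?add0r; last first.
  by move=> t /andP[/andP[_ ti]]; rewrite no_pick_before.
rewrite -addrA ler_wpDl ?sumr_ge0 // picks_from_le // modn_small //.
Qed.

End PicksAverage.

Lemma rr_greedy_pick_le {R : realFieldType} {M : finType} {N : nat}
    (u : 'I_N -> M -> R) (s : seq M) (i : 'I_N) (x0 : M) (t t' : nat) :
  rr_greedy_run u s -> (t <= t')%N -> (t' < size s)%N -> (t %% N)%N = i ->
  u i (nth x0 s t) <= u i (nth x0 s t').
Proof.
case=> s_uniq _ greedy tt' t's ti.
have ts : (t < size s)%N by exact: leq_ltn_trans t's.
have available : nth x0 s t' \notin take t s.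
  by apply/negP => /index_ltn; rewrite index_uniq //; lia.
by rewrite (set_nth_default (nth x0 s t') x0 ts) greedy.
Qed.

Lemma sum_by_position {V : nmodType} {M : finType} (x0 : M) (F : M -> V)
    (P : pred nat) (s : seq M) :
  uniq s -> (forall j, j \in s) ->
  \sum_(j | P (index j s)) F j = \sum_(0 <= t < size s | P t) F (nth x0 s t).
Proof.
move=> s_uniq s_all.
have enum_s : perm_eq (index_enum M) s.
  by apply: uniq_perm; rewrite ?index_enum_uniq // => j; rewrite mem_index_enum s_all.
rewrite (perm_big _ enum_s) (big_nth x0) big_mkcond [RHS]big_mkcond /=.
by apply: eq_big_nat => t /andP[_ ts]; rewrite index_uniq.
Qed.

Lemma uset_rr_bundle {R : realFieldType} {M : finType} {N : nat} (x0 : M)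
    (v : M -> R) (s : seq M) (i : 'I_N) :
  uniq s -> (forall j, j \in s) ->
  uset v (rr_bundle s i) = \sum_(0 <= t < size s | (t %% N == i)%N) v (nth x0 s t).
Proof.
move=> s_uniq s_all; rewrite -(sum_by_position x0) //.
by apply: eq_bigl => j; rewrite inE s_all.
Qed.

Lemma uset_setT {R : realFieldType} {M : finType} (x0 : M) (v : M -> R) (s : seq M) :
  uniq s -> (forall j, j \in s) ->
  uset v [set: M] = \sum_(0 <= t < size s) v (nth x0 s t).
Proof.
move=> s_uniq s_all; rewrite -(sum_by_position x0 _ xpredT) //.
by apply: eq_bigl => j; rewrite inE.
Qed.

Lemma le_umax {R : realFieldType} {M : finType} (v : M -> R) (j : M) : v j <= umax v.
Proof. by rewrite /umax (bigD1 j) //= le_max lexx. Qed.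

Lemma umax_ge0 {R : realFieldType} {M : finType} (v : M -> R) : 0 <= umax v.
Proof.
by rewrite /umax; elim/big_rec: _ => // j x _ x_ge0; rewrite le_max x_ge0 orbT.
Qed.

Lemma ler_mean_of_natmul {R : realFieldType} (N : nat) (b T U : R) :
  (0 < N)%N -> N%:R * b <= T + N.-1%:R * U ->
  b <= N%:R^-1 * T + (1 - N%:R^-1) * U.
Proof.
move=> N_gt0 Nb_le; have N0 : 0 < N%:R :> R by rewrite ltr0n.
rewrite -(ler_pM2l N0) mulrDr !mulrA mulrBr mulr1 mulfV ?gt_eqF // mul1r.
by rewrite -[in N%:R - 1](prednK N_gt0) -natr1 addrK.
Qed.

Theorem lemma3 (R : realFieldType) (M : finType) (N : nat)
    (u : 'I_N -> M -> R)
    (hN : (0 < N)%N)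
    (hnonneg : forall (i : 'I_N) (j : M), 0 <= u i j)
    (hM : (0 < #|M|)%N)
    (s : seq M) (hrun : rr_greedy_run u s) :
  forall i : 'I_N,
    uset (u i) (rr_bundle s i)
      <= (N%:R)^-1 * uset (u i) [set: M] + (1 - (N%:R)^-1) * umax (u i).
Proof.
move=> i; have [x0 _] := card_gt0P hM; have [s_uniq s_all _] := hrun.
rewrite (uset_rr_bundle x0 _ _ _ s_uniq s_all) (uset_setT x0 _ _ s_uniq s_all).
apply: ler_mean_of_natmul => //.
apply: (@picks_le R N i (size s) (fun t => u i (nth x0 s t))) => //.
- exact: umax_ge0.
- by move=> t _; apply: le_umax.
- by move=> t t'; apply: rr_greedy_pick_le.
Qed.
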